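(* Let $V$ be a finite-dimensional vector space, $\pi\in\wedge^2V$, and $V_1,V_2\subset V$ subspaces with $\pi(V_1^0,V_2^0)=0$. For $j=1,2$ let $\rho_j:V\to V/V_j$ be the projections. Assume $U\subset V$ is a subspace that is coisotropic with respect to $\pi$ and such that $\rho_1|_U:U\to V/V_1$ is an isomorphism, and let $\psi=\rho_2\circ(\rho_1|_U)^{-1}:V/V_1\to V/V_2$. Then $\psi(\rho_1(\pi))=-\rho_2(\pi)$ in $\wedge^2(V/V_2)$.
   Context: For a subspace $U_1\subset V$, $U_1^0=\{\xi\in V^*:\xi|_{U_1}=0\}$. $\pi(\xi,\eta)$ denotes the pairing of $\pi\in\wedge^2V$ with $\xi,\eta\in V^*$. For subspaces $U_1,U_2\subset V$, $U_1\wedge U_2=\wedge^2V\cap(U_1\otimes U_2+U_2\otimes U_1)$, and $U_1$ is coisotropic with respect to $\pi$ if $\pi\in U_1\wedge V$. Linear maps act on $\wedge^2$ in the induced way. *)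

From HB Require Import structures.
From mathcomp Require Import all_boot all_order all_algebra.
Set Implicit Arguments. Unset Strict Implicit. Unset Printing Implicit Defensive.
Import GRing.Theory.
Local Open Scope ring_scope.

(* Conventions: V = K^n as row vectors 'rV[K]_n; V^* = column vectors 'cV[K]_n
   with pairing v *m xi.  A bivector pi = sum_{i,j} P i j e_i (x) e_j in V (x) V
   is encoded by its coefficient matrix P : 'M_n; pi(xi,eta) = xi^T P eta.
   A linear map v |-> v *m A (A : 'M_(n,m)) acts on V (x) V by P |-> A^T P A.
   Subspaces of V are encoded by matrices whose row space is the subspace. *)

Definition alternating (K : fieldType) (n : nat) (P : 'M[K]_n) : Prop :=
  P^T = - P /\ forall i, P i i = 0.

Definition bipair (K : fieldType) (n : nat) (P : 'M[K]_n) (xi eta : 'cV[K]_n)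
  : K := (xi^T *m P *m eta) 0 0.

Definition wedge2_map (K : fieldType) (n m : nat) (A : 'M[K]_(n, m))
  (P : 'M[K]_n) : 'M[K]_m := A^T *m P *m A.

(* U (x) V = matrices all of whose columns lie in U, i.e. (M^T <= U);
   V (x) U = matrices all of whose rows lie in U, i.e. (M <= U).
   U /\ V = wedge^2 V intersected with (U (x) V + V (x) U). *)
Definition in_wedge_UV (K : fieldType) (n p : nat) (U : 'M[K]_(p, n))
  (P : 'M[K]_n) : Prop :=
  alternating P /\
  exists A B : 'M[K]_n, P = A + B /\ (A^T <= U)%MS /\ (B <= U)%MS.

Definition coisotropic (K : fieldType) (n p : nat) (U : 'M[K]_(p, n))
  (P : 'M[K]_n) : Prop := in_wedge_UV U P.

From HB Require Import structures.
From mathcomp Require Import all_boot all_order all_algebra.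
Set Implicit Arguments. Unset Strict Implicit. Unset Printing Implicit Defensive.
Import GRing.Theory.
Local Open Scope ring_scope.

(* Choose a right inverse S of rho_1 with values in U, so that psi = S rho_2,
   and split rho_2 = X + Y with X = rho_1 psi and Y = (1 - rho_1 S) rho_2.
   X vanishes on V_1 and rho_2 on V_2, so pi(V_1^0, V_2^0) = 0 gives
   X pi rho_2 = 0 and, by skew-symmetry, rho_2 pi X = 0; Y vanishes on U, so
   coisotropy gives Y pi Y = 0.  Expanding rho_2 pi rho_2 = (X + Y) pi (X + Y)
   then leaves exactly - X pi X = - psi(rho_1(pi)). *)

Section Sandwich.

Variables (K : fieldType) (n : nat) (P : 'M[K]_n).

Lemma sandwich_bipair a b (X : 'M_(n, a)) (Y : 'M_(n, b)) i j :
  (X^T *m P *m Y) i j = bipair P (col i X) (col j Y).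
Proof.
by rewrite /bipair tr_col !colE -row_mul mulmxA -row_mul -colE !mxE.
Qed.

Lemma sandwich_annihilator p1 p2 a b (V1 : 'M[K]_(p1, n)) (V2 : 'M[K]_(p2, n))
    (X : 'M_(n, a)) (Y : 'M_(n, b)) :
  (forall xi eta : 'cV[K]_n, V1 *m xi = 0 -> V2 *m eta = 0 ->
     bipair P xi eta = 0) ->
  V1 *m X = 0 -> V2 *m Y = 0 -> X^T *m P *m Y = 0.
Proof.
move=> annP hX hY; apply/matrixP => i j; rewrite sandwich_bipair mxE.
by apply: annP; rewrite colE mulmxA ?hX ?hY mul0mx.
Qed.

Lemma sandwich_coisotropic q a b (U : 'M[K]_(q, n)) (X : 'M_(n, a)) (Y : 'M_(n, b)) :
  coisotropic U P -> U *m X = 0 -> U *m Y = 0 -> X^T *m P *m Y = 0.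
Proof.
move=> [_ [A [B [-> [/submxP [ZA defA] /submxP [? ->]]]]]] hX hY.
rewrite -[A]trmxK defA mulmxDr mulmxDl trmx_mul -!mulmxA hY !mulmx0 addr0.
by rewrite !mulmxA -trmx_mul hX trmx0 !mul0mx.
Qed.

Lemma sandwich_skew a b (X : 'M_(n, a)) (Y : 'M_(n, b)) :
  P^T = - P -> X^T *m P *m Y = 0 -> Y^T *m P *m X = 0.
Proof.
move=> skewP hXY; apply: trmx_inj.
by rewrite !trmx_mul trmxK skewP mulNmx mulmxN mulmxA hXY oppr0 trmx0.
Qed.

Lemma sandwich_addE m (X Y : 'M_(n, m)) :
  X^T *m P *m (X + Y) = 0 -> (X + Y)^T *m P *m X = 0 -> Y^T *m P *m Y = 0 ->
  (X + Y)^T *m P *m (X + Y) = - (X^T *m P *m X).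
Proof.
rewrite [(X + Y)^T]raddfD /= !mulmxDl !mulmxDr => hX hX' ->.
have -> : X^T *m P *m Y = - (X^T *m P *m X) by apply/eqP; rewrite -subr_eq0 opprK addrC hX.
have -> : Y^T *m P *m X = - (X^T *m P *m X) by apply/eqP; rewrite -subr_eq0 opprK addrC hX'.
by rewrite addr0 subrr add0r.
Qed.

End Sandwich.

Lemma kernel_mulmx_eq0 (K : fieldType) n m p (V : 'M[K]_(p, n)) (R : 'M[K]_(n, m)) :
  (forall v : 'rV[K]_n, v *m R = 0 <-> (v <= V)%MS) -> V *m R = 0.
Proof.
by move=> kerR; apply/row_matrixP => i; rewrite row_mul row0; apply/kerR/row_sub.
Qed.

Lemma mulmx_eq_on_sub (K : fieldType) n m q p (U : 'M[K]_(q, n)) (S : 'M[K]_(p, n))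
    (A B : 'M[K]_(n, m)) :
  (forall u : 'rV[K]_n, (u <= U)%MS -> u *m A = u *m B) ->
  (S <= U)%MS -> S *m A = S *m B.
Proof.
move=> eqAB SU; apply/row_matrixP => i; rewrite !row_mul eqAB //.
exact: submx_trans (row_sub i S) SU.
Qed.

Lemma exists_right_inverse_sub (K : fieldType) n m q (U : 'M[K]_(q, n))
    (R : 'M[K]_(n, m)) :
  (forall w : 'rV[K]_m, exists2 u : 'rV[K]_n, (u <= U)%MS & u *m R = w) ->
  exists2 S : 'M[K]_(m, n), (S <= U)%MS & S *m R = 1%:M.
Proof.
move=> surjR; exists (pinvmx (U *m R) *m U); first exact: submxMl.
suff /mulmxKpV : (1%:M <= U *m R)%MS by rewrite mul1mx mulmxA.
apply/row_subP => i; have [u /submxP [z ->] <-] := surjR (row i 1%:M).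
by rewrite -mulmxA submxMl.
Qed.

Lemma right_inverse_complement_on_sub (K : fieldType) n m q (U : 'M[K]_(q, n))
    (R : 'M[K]_(n, m)) (S : 'M[K]_(m, n)) :
  (forall u : 'rV[K]_n, (u <= U)%MS -> u *m R = 0 -> u = 0) ->
  (S <= U)%MS -> S *m R = 1%:M -> U *m (1%:M - R *m S) = 0.
Proof.
move=> injR SU SR; apply/row_matrixP => i; rewrite row_mul row0.
have uU := row_sub i U; apply: injR.
  by rewrite mulmxBr mulmx1 addmx_sub // eqmx_opp mulmxA (submx_trans (submxMl _ _)).
by rewrite mulmxBr mulmx1 mulmxBl -!mulmxA SR mulmx1 subrr.
Qed.

Theorem lemmaA2 (K : fieldType) (n m1 m2 p1 p2 q : nat)
  (P : 'M[K]_n) (V1 : 'M[K]_(p1, n)) (V2 : 'M[K]_(p2, n)) (U : 'M[K]_(q, n))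
  (R1 : 'M[K]_(n, m1)) (R2 : 'M[K]_(n, m2)) (Psi : 'M[K]_(m1, m2)) :
  (* pi in wedge^2 V *)
  alternating P ->
  (* pi(V1^0, V2^0) = 0 *)
  (forall xi eta : 'cV[K]_n, V1 *m xi = 0 -> V2 *m eta = 0 ->
     bipair P xi eta = 0) ->
  (* rho_j : V -> V/V_j : surjective linear maps with kernel V_j *)
  (forall v : 'rV[K]_n, v *m R1 = 0 <-> (v <= V1)%MS) ->
  (forall w : 'rV[K]_m1, exists v : 'rV[K]_n, v *m R1 = w) ->
  (forall v : 'rV[K]_n, v *m R2 = 0 <-> (v <= V2)%MS) ->
  (forall w : 'rV[K]_m2, exists v : 'rV[K]_n, v *m R2 = w) ->
  (* U coisotropic *)
  coisotropic U P ->
  (* rho_1|_U : U -> V/V1 is an isomorphism *)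
  (forall u : 'rV[K]_n, (u <= U)%MS -> u *m R1 = 0 -> u = 0) ->
  (forall w : 'rV[K]_m1, exists2 u : 'rV[K]_n, (u <= U)%MS & u *m R1 = w) ->
  (* psi = rho_2 o (rho_1|_U)^{-1}, i.e. psi o rho_1 = rho_2 on U *)
  (forall u : 'rV[K]_n, (u <= U)%MS -> u *m R1 *m Psi = u *m R2) ->
  wedge2_map Psi (wedge2_map R1 P) = - wedge2_map R2 P.
Proof.
move=> [skewP _] annP kerR1 _ kerR2 _ coisU injR1 surjR1 defPsi.
have [S SU SR1] := exists_right_inverse_sub surjR1.
have PsiE : Psi = S *m R2.
  rewrite -[Psi]mul1mx -SR1 -mulmxA.
  by apply: mulmx_eq_on_sub SU => u /defPsi; rewrite mulmxA.
pose X := R1 *m Psi; pose Y := (1%:M - R1 *m S) *m R2.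
have R2E : R2 = X + Y by rewrite /X /Y PsiE mulmxBl mul1mx mulmxA addrC subrK.
have V1X : V1 *m X = 0 by rewrite /X mulmxA (kernel_mulmx_eq0 kerR1) mul0mx.
have UY : U *m Y = 0.
  by rewrite /Y mulmxA (right_inverse_complement_on_sub injR1 SU SR1) mul0mx.
have XR2 : X^T *m P *m R2 = 0.
  exact: sandwich_annihilator annP V1X (kernel_mulmx_eq0 kerR2).
rewrite /wedge2_map R2E sandwich_addE.
- by rewrite opprK /X trmx_mul !mulmxA.
- by rewrite -R2E.
- by rewrite -R2E (sandwich_skew skewP XR2).
- exact: (sandwich_coisotropic coisU UY UY).
Qed.
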